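(* Let $A$, $Q$, $H\subseteq A^Q$ be non-empty finite sets and $\mathcal F$ a clone with carrier $A$ such that (a) $\mathcal F$ satisfies $\Delta^\partial$, or (b) $\mathcal F$ contains a $\partial$-function and $|H(q)|\le2$ for all $q\in Q$. Suppose $H\in\mathrm{Inv}_Q\mathcal F$ and let $P=\{p,q\}\in[Q]^2$. Then one of the following holds: (1) $H|_P=\{g\in A^P: g(p)\in H(p),\ g(q)\in H(q)\}$; (2) there is $\sigma\in S_A$ such that $H|_P=\{g\in A^P: g(p)\in H(p),\ g(q)\in H(q),\ g(q)=\sigma(g(p))\}$; (3) there are $a,b\in A$ such that $H|_P=\{g\in A^P: g(p)\in H(p),\ g(q)\in H(q),\ (g(p)=a\text{ or }g(q)=b)\}$.
   Context: $\mathcal O(A)=\bigcup_{n<\omega}A^{A^n}$. A clone with carrier $A$ is a subset of $\mathcal O(A)$ containing all projections and closed under composition. For $f\in\mathcal O(A)_{[n]}$ and $h_i\in A^Q$, $f(h_0,\dots,h_{n-1})$ is $q\mapsto f(h_0(q)\dots h_{n-1}(q))$; $\mathrm{Inv}_Q\mathcal F$ is the set of $H\subseteq A^Q$ closed under all such compositions with $f\in\mathcal F$. $H(q)=\{h(q):h\in H\}$; $H|_P=\{h|_P:h\in H\}$; $[Q]^2$ is the set of 2-element subsets of $Q$; $S_A$ the set of permutations of $A$; $A^3_3$ the set of triples in $A^3$ with three distinct entries, $\mathrm{ran}\,\mathbf a$ the set of entries of $\mathbf a$. A $\partial$-function is $\partial\in\mathcal O(A)_{[3]}$ with $\partial(xxy)=\partial(xyx)=\partial(yxx)=x$;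 $\mathcal F$ satisfies $\Delta^\partial$ if for all $\mathbf a\in A^3_3$ and $a\in\mathrm{ran}\,\mathbf a$ there is a $\partial$-function $\partial\in\mathcal F$ with $\partial(\mathbf a)=a$. *)

From mathcomp Require Import all_boot perm.
Set Implicit Arguments. Unset Strict Implicit. Unset Printing Implicit Defensive.

Definition op (A : finType) (n : nat) := {ffun {ffun 'I_n -> A} -> A}.

Definition is_clone (A : finType) (F : forall n, {set op A n}) : Prop :=
  (forall n (i : 'I_n), [ffun x : {ffun 'I_n -> A} => x i] \in F n) /\
  (forall n m (f : op A n) (g : 'I_n -> op A m),
      f \in F n -> (forall i, g i \in F m) ->
      [ffun x : {ffun 'I_m -> A} => f [ffun i => g i x]] \in F m).

Definition trip (A : finType) (x y z : A) : {ffun 'I_3 -> A} :=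
  [ffun i : 'I_3 => nth x [:: x; y; z] i].

Definition is_partial (A : finType) (d : op A 3) : Prop :=
  forall x y : A, d (trip x x y) = x /\ d (trip x y x) = x /\ d (trip y x x) = x.

Definition Delta_partial (A : finType) (F : forall n, {set op A n}) : Prop :=
  forall x y z : A, x != y -> y != z -> x != z ->
  forall a : A, a \in [:: x; y; z] ->
  exists2 d, d \in F 3 & is_partial d /\ d (trip x y z) = a.

Definition Inv (A Q : finType) (F : forall n, {set op A n})
  (H : {set {ffun Q -> A}}) : Prop :=
  forall n (f : op A n) (h : 'I_n -> {ffun Q -> A}),
    f \in F n -> (forall i, h i \in H) ->
    [ffun q => f [ffun i => h i q]] \in H.

Definition Hat (A Q : finType) (H : {set {ffun Q -> A}}) (q : Q) : {set A} :=
  [set (h : {ffun Q -> A}) q | h in H].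

(* H|_{p,q}, with a function g : {p,q} -> A encoded as the pair (g p, g q) *)
Definition restr2 (A Q : finType) (H : {set {ffun Q -> A}}) (p q : Q)
  : {set A * A} := [set ((h : {ffun Q -> A}) p, h q) | h in H].

From mathcomp Require Import all_boot perm.
Set Implicit Arguments. Unset Strict Implicit. Unset Printing Implicit Defensive.

(* Write R = H|_P as a relation between X = H(p) and Y = H(q).
   Closure of H under a ∂-function d with d(y1 y2 y3) = y3 shows that a row
   {y | (x, y) ∈ R} with two distinct entries is all of Y (under (b) there is
   no third entry to add), and likewise for columns.  A relation with full
   projections whose rows and columns are each a singleton or full is one of:
   the whole rectangle X × Y (two full rows, or a full column), a cross
   {x0} × Y ∪ X × {b} (exactly one full row), or the graph of a bijection
   X → Y, which extends to a permutation of A. *)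

Lemma perm_extension (T : finType) (X : {set T}) (f : T -> T) :
  {in X &, injective f} -> exists s : {perm T}, {in X, s =1 f}.
Proof.
move=> f_inj.
set cX := enum (~: X); set cY := enum (~: (f @: X)).
have size_cX : size cX = size cY.
  rewrite -!cardE; apply: (@addnI #|X|).
  by rewrite -[in RHS](card_in_imset f_inj) !cardsC.
(* Off X, g sends the i-th element of ~: X to the i-th element of ~: f @: X. *)
pose g x := if x \in X then f x else nth x cY (index x cX).
have cX_mem x : x \notin X -> x \in cX by rewrite mem_enum inE.
have index_lt x : x \notin X -> index x cX < size cY.
  by move=> Xx; rewrite -size_cX index_mem cX_mem.
have g_out x : x \notin X -> g x \notin f @: X.
  move=> Xx; rewrite /g (negbTE Xx).
  by have := mem_nth x (index_lt x Xx); rewrite mem_enum inE.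
have g_inj : injective g.
  move=> x x'; case: (boolP (x \in X)) => Xx; case: (boolP (x' \in X)) => Xx'.
  - by rewrite /g Xx Xx'; apply: f_inj.
  - by move=> gxx'; have := g_out x' Xx'; rewrite -gxx' /g Xx imset_f.
  - by move=> gxx'; have := g_out x Xx; rewrite gxx' /g Xx' imset_f.
  rewrite /g (negbTE Xx) (negbTE Xx') (set_nth_default x x' (index_lt x' Xx')).
  move/eqP; rewrite nth_uniq ?enum_uniq ?index_lt // => /eqP eq_index.
  by rewrite -(nth_index x (cX_mem x Xx)) eq_index nth_index ?cX_mem.
by exists (perm g_inj) => x Xx; rewrite permE /g Xx.
Qed.

Lemma card_le2_mem (T : finType) (S : {set T}) a b c :
  #|S| <= 2 -> a \in S -> b \in S -> a != b -> c \in S -> (c == a) || (c == b).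
Proof.
move=> card_S Sa Sb ab Sc.
have S_ab : [set a; b] = S.
  apply/eqP; rewrite eqEcard cards2 ab card_S andbT.
  by apply/subsetP => z; rewrite !inE => /orP[] /eqP->.
by move: Sc; rewrite -S_ab !inE.
Qed.

Section RowColumnFilledRelation.

Variables (A : finType) (X Y : {set A}) (R : {set A * A}).

Hypothesis R_sub : {subset R <= setX X Y}.
Hypothesis R_dom : {in X, forall x, exists y, (x, y) \in R}.
Hypothesis R_codom : {in Y, forall y, exists x, (x, y) \in R}.
Hypothesis row_fill : forall x y1 y2 y,
  (x, y1) \in R -> (x, y2) \in R -> y1 != y2 -> y \in Y -> (x, y) \in R.
Hypothesis col_fill : forall x1 x2 y x,
  (x1, y) \in R -> (x2, y) \in R -> x1 != x2 -> x \in X -> (x, y) \in R.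

Definition branching_row x :=
  [exists y1, exists y2, [&& (x, y1) \in R, (x, y2) \in R & y1 != y2]].

Definition branching_col y :=
  [exists x1, exists x2, [&& (x1, y) \in R, (x2, y) \in R & x1 != x2]].

Lemma R_memX x y : (x, y) \in R -> x \in X.
Proof. by move/R_sub; rewrite in_setX => /andP[]. Qed.

Lemma R_memY x y : (x, y) \in R -> y \in Y.
Proof. by move/R_sub; rewrite in_setX => /andP[]. Qed.

Lemma branching_row_full x y : branching_row x -> y \in Y -> (x, y) \in R.
Proof.
case/existsP=> y1 /existsP[y2 /and3P[xy1 xy2 y12]].
exact: row_fill xy1 xy2 y12.
Qed.

Lemma branching_col_full x y : branching_col y -> x \in X -> (x, y) \in R.
Proof.
case/existsP=> x1 /existsP[x2 /and3P[x1y x2y x12]].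
exact: col_fill x1y x2y x12.
Qed.

Lemma row_uniq x y1 y2 :
  ~~ branching_row x -> (x, y1) \in R -> (x, y2) \in R -> y1 = y2.
Proof.
move=> nbr xy1 xy2; apply/eqP; apply: contraNT nbr => y12.
by apply/existsP; exists y1; apply/existsP; exists y2; rewrite xy1 xy2.
Qed.

Lemma col_uniq x1 x2 y :
  ~~ branching_col y -> (x1, y) \in R -> (x2, y) \in R -> x1 = x2.
Proof.
move=> nbc x1y x2y; apply/eqP; apply: contraNT nbc => x12.
by apply/existsP; exists x1; apply/existsP; exists x2; rewrite x1y x2y.
Qed.

Lemma rect_of_branching_rows x0 x1 :
  x0 != x1 -> branching_row x0 -> branching_row x1 -> R = setX X Y.
Proof.
move=> x01 br0 br1; apply/setP=> -[x y]; apply/idP/idP; first exact: R_sub.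
rewrite in_setX => /andP[Xx Yy].
exact: col_fill (branching_row_full br0 Yy) (branching_row_full br1 Yy) x01 Xx.
Qed.

Lemma rect_of_single_row x0 :
  branching_row x0 -> {in X, forall x, x = x0} -> R = setX X Y.
Proof.
move=> br0 X_x0; apply/setP=> -[x y]; apply/idP/idP; first exact: R_sub.
by rewrite in_setX => /andP[/X_x0-> Yy]; apply: branching_row_full.
Qed.

Lemma cross_of_branching_row x0 x1 :
  branching_row x0 -> (forall x, x != x0 -> ~~ branching_row x) ->
  x1 \in X -> x1 != x0 ->
  exists b, R = [set g in setX X Y | (g.1 == x0) || (g.2 == b)].
Proof.
move=> br0 nbr X_x1 x10; have [b x1b] := R_dom X_x1.
have col_b x : x \in X -> (x, b) \in R.
  have x0b := branching_row_full br0 (R_memY x1b).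
  by apply: col_fill x0b x1b _; rewrite eq_sym.
exists b; apply/setP=> -[x y]; rewrite inE /=; apply/idP/idP.
- move=> xy; rewrite R_sub //=; have [// | xx0] := eqVneq x x0.
  by rewrite (row_uniq (nbr x xx0) xy (col_b x (R_memX xy))) eqxx.
- rewrite in_setX => /andP[/andP[Xx Yy] /orP[] /eqP->].
    exact: branching_row_full.
  exact: col_b.
Qed.

Lemma rect_of_branching_col y0 :
  branching_col y0 -> (forall x, ~~ branching_row x) -> R = setX X Y.
Proof.
move=> bc0 nbr; apply/setP=> -[x y]; apply/idP/idP; first exact: R_sub.
rewrite in_setX => /andP[Xx Yy]; have [x' x'y] := R_codom Yy.
rewrite (row_uniq (nbr x') x'y (branching_col_full bc0 (R_memX x'y))).
exact: branching_col_full.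
Qed.

Lemma graph_of_nonbranching :
  (forall x, ~~ branching_row x) -> (forall y, ~~ branching_col y) ->
  exists s : {perm A}, R = [set g in setX X Y | g.2 == s g.1].
Proof.
move=> nbr nbc; pose f x := odflt x [pick y | (x, y) \in R].
have R_f x : x \in X -> (x, f x) \in R.
  move=> Xx; rewrite /f; case: pickP => [y // | noR].
  by have [y xy] := R_dom Xx; rewrite noR in xy.
have f_inj : {in X &, injective f}.
  move=> x x' Xx Xx' fxx'.
  by apply: col_uniq (nbc (f x)) (R_f x Xx) _; rewrite fxx' R_f.
have [s sf] := perm_extension f_inj.
exists s; apply/setP=> -[x y]; rewrite inE /=; apply/idP/idP.
- move=> xy; have Xx := R_memX xy.
  by rewrite R_sub //= sf // (row_uniq (nbr x) xy (R_f x Xx)).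
- by rewrite in_setX => /andP[/andP[Xx _] /eqP->]; rewrite sf ?R_f.
Qed.

Lemma row_col_filled_trichotomy :
  R = setX X Y \/
  (exists s : {perm A}, R = [set g in setX X Y | g.2 == s g.1]) \/
  (exists a b, R = [set g in setX X Y | (g.1 == a) || (g.2 == b)]).
Proof.
have [/existsP[x0 br0] | /existsPn nbr] := boolP [exists x, branching_row x].
  have [/existsP[x1 /andP[x10 br1]] | /existsPn nbr1] :=
    boolP [exists x, (x != x0) && branching_row x].
    by left; apply: rect_of_branching_rows br0 br1; rewrite eq_sym.
  have nbr' x : x != x0 -> ~~ branching_row x.
    by move=> xx0; have := nbr1 x; rewrite xx0.
  have [/existsP[x1 /andP[X_x1 x10]] | /existsPn X_x0] :=
    boolP [exists x in X, x != x0].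
    by right; right; exists x0; apply: cross_of_branching_row x10.
  left; apply: rect_of_single_row br0 _ => x Xx.
  by apply/eqP; have := X_x0 x; rewrite Xx negbK.
have [/existsP[y0 bc0] | /existsPn nbc] := boolP [exists y, branching_col y].
  by left; apply: rect_of_branching_col bc0 nbr.
by right; left; apply: graph_of_nonbranching.
Qed.

End RowColumnFilledRelation.

Section InvariantRestriction.

Variables (A Q : finType) (H : {set {ffun Q -> A}}).
Variable F : forall n, {set op A n}.

Lemma restr2_swap p q x y :
  ((x, y) \in restr2 H p q) = ((y, x) \in restr2 H q p).
Proof.
by apply/imsetP/imsetP=> -[h Hh [-> ->]]; exists h.
Qed.

Lemma restr2_sub p q : {subset restr2 H p q <= setX (Hat H p) (Hat H q)}.
Proof.
move=> _ /imsetP[h Hh ->].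
by rewrite in_setX; apply/andP; split; apply/imsetP; exists h.
Qed.

Lemma restr2_dom p q :
  {in Hat H p, forall x, exists y, (x, y) \in restr2 H p q}.
Proof.
by move=> _ /imsetP[h Hh ->]; exists (h q); apply/imsetP; exists h.
Qed.

Lemma restr2_codom p q :
  {in Hat H q, forall y, exists x, (x, y) \in restr2 H p q}.
Proof.
by move=> y /(restr2_dom p) [x yx]; exists x; rewrite restr2_swap.
Qed.

Hypothesis H_inv : Inv F H.

Lemma restr2_op3 p q d x1 x2 x3 y1 y2 y3 : d \in F 3 ->
  (x1, y1) \in restr2 H p q -> (x2, y2) \in restr2 H p q ->
  (x3, y3) \in restr2 H p q ->
  (d (trip x1 x2 x3), d (trip y1 y2 y3)) \in restr2 H p q.
Proof.
move=> Fd /imsetP[h1 H1 [-> ->]] /imsetP[h2 H2 [-> ->]] /imsetP[h3 H3 [-> ->]].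
pose h (i : 'I_3) := nth h1 [:: h1; h2; h3] i.
have Hh i : h i \in H by case: i => [[|[|[|]]]].
apply/imsetP; exists [ffun r => d [ffun i => h i r]]; first exact: H_inv.
rewrite !ffunE; congr (d _, d _);
  by apply/ffunP=> i; rewrite !ffunE; case: i => [[|[|[|]]]].
Qed.

Hypothesis Delta_or_card_le2 : Delta_partial F \/ (forall r, #|Hat H r| <= 2).

(* A ∂-function sending (y1, y2, y) to y sends (x, x, x') to x. *)
Lemma restr2_row_fill p q x y1 y2 y :
  (x, y1) \in restr2 H p q -> (x, y2) \in restr2 H p q -> y1 != y2 ->
  y \in Hat H q -> (x, y) \in restr2 H p q.
Proof.
move=> xy1 xy2 y12 Yy; have [x' x'y] := restr2_codom p Yy.
have [-> // | yy1] := eqVneq y y1; have [-> // | yy2] := eqVneq y y2.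
case: Delta_or_card_le2 => [Delta | card_le2].
  have [d Fd [d_partial d_y]] :
    exists2 d, d \in F 3 & is_partial d /\ d (trip y1 y2 y) = y.
    by apply: Delta; rewrite // ?inE ?eqxx ?orbT // eq_sym.
  by have := restr2_op3 Fd xy1 xy2 x'y; rewrite d_y (d_partial x x').1.
have Hat_q z : (x, z) \in restr2 H p q -> z \in Hat H q.
  by move/restr2_sub; rewrite in_setX => /andP[].
have := card_le2_mem (card_le2 q) (Hat_q _ xy1) (Hat_q _ xy2) y12 Yy.
by rewrite (negbTE yy1) (negbTE yy2).
Qed.

End InvariantRestriction.

Theorem lemma2 (A Q : finType) (H : {set {ffun Q -> A}})
  (F : forall n, {set op A n}) (p q : Q) :
  0 < #|A| -> 0 < #|Q| -> H != set0 ->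
  is_clone F ->
  (Delta_partial F \/
   ((exists2 d, d \in F 3 & is_partial d) /\ (forall r : Q, #|Hat H r| <= 2))) ->
  Inv F H ->
  p != q ->
  let base := [set g : A * A | (g.1 \in Hat H p) && (g.2 \in Hat H q)] in
  restr2 H p q = base \/
  (exists sigma : {perm A},
      restr2 H p q = [set g in base | g.2 == sigma g.1]) \/
  (exists a b : A,
      restr2 H p q = [set g in base | (g.1 == a) || (g.2 == b)]).
Proof.
move=> _ _ _ _ F_cases H_inv _ base; rewrite {}/base.
have Delta_or_card_le2 : Delta_partial F \/ (forall r, #|Hat H r| <= 2).
  by case: F_cases => [| [_ card_le2]]; [left | right].
apply: row_col_filled_trichotomy;
  [exact: restr2_sub | exact: restr2_dom | exact: restr2_codom |
   exact: (restr2_row_fill H_inv Delta_or_card_le2) | ].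
move=> x1 x2 y x; rewrite !(restr2_swap _ p q).
exact: (restr2_row_fill H_inv Delta_or_card_le2).
Qed.
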